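(* Let $\lambda\in\mathbb C$ be such that the generalized Verma module $M^+_\lambda$ is irreducible, with generating vector $v_\lambda$. Let $\mathcal V$ be a $U\mathfrak g$-module and $w\in\mathcal V$. Then there is at most one element $z\in M^+_\lambda\check\otimes\mathcal V$ which is $U\mathfrak g$-invariant (i.e. $x\cdot z=0$ for all $x\in\mathfrak g$, with $\mathfrak g$ acting via the coproduct) and satisfies $z\in v_\lambda\otimes w+(U\mathfrak n_-)_{<0}\cdot v_\lambda\check\otimes\mathcal V$.
   Context: $\mathfrak g=\bigoplus_{i\in\mathbb Z}\mathfrak g_i$ is a $\mathbb Z$-graded complex Lie algebra with finite-dimensional components; $\mathfrak n_+=\bigoplus_{i>0}\mathfrak g_i$, $\mathfrak n_-=\bigoplus_{i<0}\mathfrak g_i$, $\mathfrak p_+=\mathfrak g_0\oplus\mathfrak n_+$. $\chi:\mathfrak g_0\to\mathbb C$ is a nonsingular character (Lie algebra homomorphism such that $(u,v)\mapsto\chi([u,v]_0)$ is a nondegenerate pairing $\mathfrak n_+\times\mathfrak n_-\to\mathbb C$, $x_0$ being the $\mathfrak g_0$-component). For $\lambda\in\mathbb C$, $\chi_\lambda=\lambda\chi$ is made a $\mathfrak p_+$-module by letting $\mathfrak n_+$ act by zero, and $M^+_\lambda=U\mathfrak g\otimes_{U\mathfrak p_+}\chi_\lambda$ is the generalized Verma module with generating vector $v_\lambda=1\otimes1$; $M^+_\lambda$ is a free $U\mathfrak n_-$-module on $v_\lambda$ and is graded by $(M^+_\lambda)_{-n}=(U\mathfrak n_-)_{-n}v_\lambda$.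 For a $\mathbb Z$-graded $U\mathfrak g$-module $M$ and any $U\mathfrak g$-module $V$, the completed tensor product is $M\check\otimes V=\prod_i M_i\otimes V$ (formal infinite sums of homogeneous components), with $U\mathfrak g$ acting via the coproduct $\Delta(x)=x\otimes1+1\otimes x$, $x\in\mathfrak g$. *)

From HB Require Import structures.
From mathcomp Require Import all_boot all_algebra complex reals.
Set Implicit Arguments. Unset Strict Implicit. Unset Printing Implicit Defensive.
Import GRing.Theory.
Local Open Scope ring_scope.

Section Defs.
Variable K : fieldType.

Definition inspan (V : lmodType K) (s : seq V) (x : V) : Prop :=
  exists c : 'I_(size s) -> K, x = \sum_(j < size s) c j *: s`_j.

Record lieAlgebra := LieAlgebra {
  lie_car :> lmodType K;
  lie_br : lie_car -> lie_car -> lie_car;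
  lie_brDl : forall x y z, lie_br (x + y) z = lie_br x z + lie_br y z;
  lie_brZl : forall a x y, lie_br (a *: x) y = a *: lie_br x y;
  lie_br_alt : forall x, lie_br x x = 0;
  lie_jacobi : forall x y z,
    lie_br x (lie_br y z) + lie_br y (lie_br z x) + lie_br z (lie_br x y) = 0 }.

(* Z-graded Lie algebras g = (+)_i g_i with finite-dimensional components,
   given by the family of projections gl_pr i : g -> g_i of the direct sum *)
Record gradedLie := GradedLie {
  gl_lie :> lieAlgebra;
  gl_pr : int -> gl_lie -> gl_lie;
  gl_prD : forall i x y, gl_pr i (x + y) = gl_pr i x + gl_pr i y;
  gl_prZ : forall i a x, gl_pr i (a *: x) = a *: gl_pr i x;
  gl_prK : forall i j x, gl_pr i (gl_pr j x) = if i == j then gl_pr j x else 0;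
  gl_decomp : forall x, exists s : seq int,
     [/\ uniq s, (forall i, i \notin s -> gl_pr i x = 0) & x = \sum_(i <- s) gl_pr i x];
  gl_br_homog : forall i j x y, gl_pr i x = x -> gl_pr j y = y ->
     gl_pr (i + j) (lie_br x y) = lie_br x y;
  gl_findim : forall i, exists s : seq gl_lie, forall x, gl_pr i x = x -> inspan s x }.

Section Graded.
Variable g : gradedLie.

Definition homog (i : int) (x : g) : Prop := gl_pr i x = x.
Definition inNp (x : g) : Prop := forall i : int, i <= 0 -> gl_pr i x = 0.
Definition inNm (x : g) : Prop := forall i : int, 0 <= i -> gl_pr i x = 0.

(* chi : g_0 -> K a nonsingular character; chi is encoded as a function on g
   factoring through the projection onto g_0 *)
Definition nonsingular_character (chi : g -> K) : Prop :=
  [/\ forall a x y, chi (a *: x + y) = a * chi x + chi y,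
      forall x, chi x = chi (gl_pr 0 x),
      forall u v, homog 0 u -> homog 0 v -> chi (lie_br u v) = 0,
      forall u, inNp u -> (forall v, inNm v -> chi (gl_pr 0 (lie_br u v)) = 0) -> u = 0 &
      forall v, inNm v -> (forall u, inNp u -> chi (gl_pr 0 (lie_br u v)) = 0) -> v = 0].

Record gModule := GModule {
  gm_car :> lmodType K;
  gm_act : g -> gm_car -> gm_car;
  gm_actDl : forall x y m, gm_act (x + y) m = gm_act x m + gm_act y m;
  gm_actZl : forall a x m, gm_act (a *: x) m = a *: gm_act x m;
  gm_actDr : forall x m n, gm_act x (m + n) = gm_act x m + gm_act x n;
  gm_actZr : forall a x m, gm_act x (a *: m) = a *: gm_act x m;
  gm_act_br : forall x y m,
    gm_act (lie_br x y) m = gm_act x (gm_act y m) - gm_act y (gm_act x m) }.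

(* w spans a copy of the p_+-module chi_lam *)
Definition hw_vector (chi : g -> K) (lam : K) (W : gModule) (w : W) : Prop :=
  (forall x, inNp x -> gm_act x w = 0) /\
  (forall h, homog 0 h -> gm_act h w = (lam * chi h) *: w).

Definition gHom (M W : gModule) (f : M -> W) : Prop :=
  (forall a m n, f (a *: m + n) = a *: f m + f n) /\
  (forall x m, f (gm_act x m) = gm_act x (f m)).

(* (M, v) is the generalized Verma module U g (x)_{U p_+} chi_lam with
   generating vector v = 1 (x) 1, given by its defining universal property
   (Hom_g(U g (x)_{U p+} chi_lam, W) = Hom_{p+}(chi_lam, W)). *)
Definition is_gen_verma (chi : g -> K) (lam : K) (M : gModule) (v : M) : Prop :=
  hw_vector chi lam v /\
  forall (W : gModule) (w : W), hw_vector chi lam w ->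
    exists f : M -> W,
      [/\ gHom f, f v = w & forall f', gHom f' -> f' v = w -> forall m, f' m = f m].

Definition submodule (M : gModule) (S : M -> Prop) : Prop :=
  [/\ S 0, (forall a m n, S m -> S n -> S (a *: m + n)) &
      (forall x m, S m -> S (gm_act x m))].

Definition irreducible (M : gModule) : Prop :=
  (exists m : M, m <> 0) /\
  forall S, submodule S -> (exists m, S m /\ m <> 0) -> forall m : M, S m.

Section Verma.
Variables (M : gModule) (v : M).

(* unm_mono n m : m = x_1 ... x_k v with x_j \in g_{-d_j}, d_j > 0,
   sum d_j = n, i.e. m is a monomial of (U n_-)_{-n} applied to v *)
Inductive unm_mono : nat -> M -> Prop :=
| unm_mono0 : unm_mono 0 v
| unm_monoS : forall (d n : nat) (x : g) (m : M), (0 < d)%N ->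
    homog (- (d%:Z)) x -> unm_mono n m -> unm_mono (n + d) (gm_act x m).

(* the graded component M_{-n} = (U n_-)_{-n} v *)
Definition Mdeg (n : nat) (m : M) : Prop :=
  exists s : seq M, (forall y, y \in s -> unm_mono n y) /\ inspan s m.

Variable V : gModule.

(* Elements of M (x) V are represented by finite lists of pure tensors
   [:: (m_1, w_1); ...] standing for sum_j m_j (x) w_j; two such are equal
   in M (x) V iff they agree under every f (x) id, f a linear functional on M. *)
Definition lin_functional (f : M -> K) : Prop :=
  forall a x y, f (a *: x + y) = a * f x + f y.
Definition tens_eval (f : M -> K) (t : seq (M * V)) : V :=
  \sum_(p <- t) f p.1 *: p.2.
Definition tens_eq (t1 t2 : seq (M * V)) : Prop :=
  forall f, lin_functional f -> tens_eval f t1 = tens_eval f t2.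

(* An element z of the completed tensor product M (x)^ V = prod_n M_{-n} (x) V
   is a family n |-> z n, with z n \in M_{-n} (x) V the degree -n component. *)
Definition in_ctens (z : nat -> seq (M * V)) : Prop :=
  forall n p, p \in z n -> Mdeg n p.1.

Definition zc (z : nat -> seq (M * V)) (k : int) : seq (M * V) :=
  match k with
  | Posz 0 => z 0%N
  | Posz _ => [::]
  | Negz n => z n.+1
  end.

(* degree k component of x . z = (x (x) 1 + 1 (x) x) z, where s is a finite
   list of degrees outside of which the homogeneous components of x vanish *)
Definition act_comp (x : g) (s : seq int) (z : nat -> seq (M * V)) (k : int)
  : seq (M * V) :=
  flatten [seq [seq (gm_act (gl_pr i x) p.1, p.2) | p <- zc z (k - i)] | i <- s]
  ++ [seq (p.1, gm_act x p.2) | p <- zc z k].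

Definition ctens_invariant (z : nat -> seq (M * V)) : Prop :=
  forall (x : g) (s : seq int), uniq s -> (forall i, i \notin s -> gl_pr i x = 0) ->
    forall k : int, tens_eq (act_comp x s z k) [::].

(* z \in v (x) w + (U n_-)_{<0} v (x)^ V : its degree-0 component is v (x) w *)
Definition leading_term (w : V) (z : nat -> seq (M * V)) : Prop :=
  tens_eq (z 0%N) [:: (v, w)].

End Verma.
End Graded.
End Defs.

(* Contract the V-factor with a linear functional phi on V: the difference of the degree -n
   components of two solutions becomes a vector d_n of M_{-n}.  For x in g_j, j > 0, the
   degree j - n component of the invariance equation expresses x . d_n through components of
   degree > -n, so by induction on n every d_n is annihilated by n_+.  The submodule generated
   by such a d_n is then U(g_0 + n_-) . d_n, which lies in M_{<0}; it cannot contain v, so by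
   irreducibility d_n = 0.  That v is not in M_{<0} follows from the universal property of
   M: for lam = 0 map M to the trivial module; for lam <> 0 map M to its twist by the grading
   automorphism x |-> sum_i 2^i x_i, which fixes v and rescales M_{-n} by 2^-n.  The bracket
   is only assumed linear in its first argument, so the twist is a module only because the
   kernel of the action lies in degree 0, which follows from the nonsingularity of chi. *)

From HB Require Import structures.
From mathcomp Require Import all_boot all_algebra complex reals.
From mathcomp Require Import order boolp classical_sets zify.
Import GRing.Theory.
Local Open Scope ring_scope.

Set Implicit Arguments. Unset Strict Implicit. Unset Printing Implicit Defensive.
Import Order.TTheory Num.Theory.

Section Separation.
Variables (K : fieldType) (W : lmodType K) (y : W).

Definition lin_closed (A : set W) := forall a x z, A x -> A z -> A (a *: x + z).
Definition avoids (A : set W) := lin_closed A /\ ~ A y.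

Lemma exists_maximal_avoiding :
  exists A, avoids A /\ forall B, (A `<` B)%classic -> ~ avoids B.
Proof.
apply: Zorn_bigcup => F FP Ftot; split; last by move=> [X /FP[]].
move=> a x z [X FX Xx] [Z FZ Zz].
have [XZ|ZX] := Ftot X Z FX FZ.
- by exists Z => //; apply: (proj1 (FP Z FZ)) => //; exact: XZ.
- by exists X => //; apply: (proj1 (FP X FX)) => //; exact: ZX.
Qed.

Hypothesis y_neq0 : y != 0.
Variable A : set W.
Hypotheses (A_avoids : avoids A) (A_max : forall B, (A `<` B)%classic -> ~ avoids B).

Let A_lin : lin_closed A := proj1 A_avoids.
Let Ay : ~ A y := proj2 A_avoids.

Lemma maximal_avoiding0 : A 0.
Proof.
apply: contrapT => nA0; apply: (A_max (B := [set 0]%classic)).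
  split=> [x Ax|/(_ 0 erefl)//]; exfalso.
  by apply: nA0; have := A_lin (-1) Ax Ax; rewrite scaleN1r addNr.
split=> [a x z -> ->|/= y0]; first by rewrite scaler0 addr0.
by move: y_neq0; rewrite y0 eqxx.
Qed.

Lemma maximal_avoiding_coord u : exists c, A (u - c *: y).
Proof.
apply: contrapT => nu.
pose B t := exists h c, A h /\ t = h + c *: u.
apply: (A_max (B := B)); last first.
  split=> [a x z [h1 [c1 [Ah1 ->]]] [h2 [c2 [Ah2 ->]]]|[h [c [Ah yE]]]].
    exists (a *: h1 + h2), (a * c1 + c2); split; first exact: A_lin.
    by rewrite scalerDr scalerDl scalerA addrACA.
  have [c0|cn0] := eqVneq c 0; first by apply: Ay; rewrite yE c0 scale0r addr0.
  apply: nu; exists c^-1.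
  have -> : u - c^-1 *: y = (- c^-1) *: h + 0.
    by rewrite yE scalerDr scalerA mulVf // scale1r addr0 scaleNr opprD addrCA subrr addr0.
  exact: A_lin maximal_avoiding0.
split=> [x Ax|BA]; first by exists x, 0; rewrite scale0r addr0.
have /BA Au : B u by exists 0, 1; rewrite scale1r add0r; split=> //; exact: maximal_avoiding0.
by apply: nu; exists 0; rewrite scale0r subr0.
Qed.

Lemma maximal_avoiding_coord_uniq u c c' :
  A (u - c *: y) -> A (u - c' *: y) -> c = c'.
Proof.
move=> Ac Ac'; apply: contrapT => /eqP ncc.
have := A_lin (-1) Ac Ac'; rewrite scaleN1r opprB addrA subrK -scalerBl => Ay'.
apply: Ay; have := A_lin (c - c')^-1 Ay' maximal_avoiding0.
by rewrite addr0 scalerA mulVf ?scale1r // subr_eq0.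
Qed.

End Separation.

Lemma scalar_separates (K : fieldType) (W : lmodType K) (y : W) :
  (forall f : W -> K, scalar f -> f y = 0) -> y = 0.
Proof.
move=> fy0; apply/eqP; apply: contraT => y_neq0.
have [A [A_avoids A_max]] := exists_maximal_avoiding y.
pose f u := projT1 (cid (maximal_avoiding_coord y_neq0 A_avoids A_max u)).
have fP u : A (u - f u *: y) by rewrite /f; case: cid.
have coord := maximal_avoiding_coord_uniq y_neq0 A_avoids A_max.
have f_lin : scalar f.
  move=> a u u'; apply: (coord (a *: u + u')); first exact: fP.
  have -> : a *: u + u' - (a * f u + f u') *: y = a *: (u - f u *: y) + (u' - f u' *: y).
    by rewrite scalerDl scalerBr scalerA opprD addrACA.
  exact: (proj1 A_avoids) (fP u) (fP u').
have : f y = 1.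
  apply: (coord y); first exact: fP.
  by rewrite scale1r subrr; exact: (maximal_avoiding0 y_neq0 A_avoids A_max).
by rewrite fy0 // => /eqP; rewrite eq_sym oner_eq0.
Qed.

Section BigSupport.
Variables (V : nmodType) (I : eqType).

Lemma sum_seq_supp1 (s : seq I) (F : I -> V) k :
  uniq s -> (forall j, j \in s -> j != k -> F j = 0) -> (k \notin s -> F k = 0) ->
  \sum_(j <- s) F j = F k.
Proof.
move=> us F0 Fk; have [ks|nks] := boolP (k \in s).
  by rewrite (bigD1_seq k) //= big1_seq ?addr0 // => j /andP[jk js]; exact: F0.
rewrite Fk // big1_seq // => j /andP[_ js]; apply: F0 => //.
by apply: contraNneq nks => <-.
Qed.

Lemma sum_seq_supp_eq (s s' : seq I) (F : I -> V) :
  uniq s -> uniq s' -> (forall i, i \notin s -> F i = 0) ->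
  (forall i, i \notin s' -> F i = 0) -> \sum_(i <- s) F i = \sum_(i <- s') F i.
Proof.
move=> us us' Fs Fs'.
rewrite (bigID (mem s')) /= [X in _ + X]big1 ?addr0; last by move=> i /Fs'.
rewrite [RHS](bigID (mem s)) /= [X in _ + X]big1 ?addr0; last by move=> i /Fs.
rewrite -big_filter -[RHS]big_filter; apply: perm_big.
by apply: uniq_perm; rewrite ?filter_uniq // => i; rewrite !mem_filter andbC.
Qed.

End BigSupport.

Section GradedLie.
Variables (K : fieldType) (g : gradedLie K).
Local Notation br := (@lie_br K g).
Local Notation pr := (@gl_pr K g).

Lemma lie_br0l y : br 0 y = 0.
Proof. by have := lie_brZl 0 0 y; rewrite !scale0r. Qed.

Lemma lie_br_suml (I : Type) (s : seq I) (F : I -> g) y :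
  br (\sum_(i <- s) F i) y = \sum_(i <- s) br (F i) y.
Proof.
elim: s => [|i s IH]; first by rewrite !big_nil lie_br0l.
by rewrite !big_cons lie_brDl IH.
Qed.

Lemma gl_pr_linear i : linear (pr i).
Proof. by move=> a x y; rewrite gl_prD gl_prZ. Qed.

HB.instance Definition _ i := GRing.isLinear.Build K g g *:%R (pr i) (gl_pr_linear i).

Lemma homog_pr i (x : g) : homog i (pr i x).
Proof. by rewrite /homog gl_prK eqxx. Qed.

Lemma homog_prE i j (x : g) : homog j x -> pr i x = if i == j then x else 0.
Proof. by move=> hx; rewrite -{1}hx gl_prK hx. Qed.

Lemma homog_pr_eq0 i j (x : g) : homog j x -> i != j -> pr i x = 0.
Proof. by move=> /homog_prE-> /negPf->. Qed.

Lemma lie_br0r_homog i (x : g) : homog i x -> br x 0 = 0.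
Proof.
move=> hx; have hx0 j : homog (i + j) (br x 0) by apply: gl_br_homog hx _; rewrite /homog raddf0.
by rewrite -(hx0 0) (homog_pr_eq0 (hx0 1)) // (inj_eq (addrI i)).
Qed.

Lemma homog_inNp j (x : g) : 0 < j -> homog j x -> inNp x.
Proof.
move=> j_gt0 hx i i_le0; rewrite (homog_pr_eq0 hx) //.
by apply: contraTneq i_le0 => ->; rewrite -ltNge.
Qed.

Lemma homog_inNm j (x : g) : j < 0 -> homog j x -> inNm x.
Proof.
move=> j_lt0 hx i i_ge0; rewrite (homog_pr_eq0 hx) //.
by apply: contraTneq i_ge0 => ->; rewrite -ltNge.
Qed.

Definition gl_supp (x : g) : seq int := projT1 (cid (gl_decomp x)).

Lemma gl_suppP x : [/\ uniq (gl_supp x), forall i, i \notin gl_supp x -> pr i x = 0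
  & x = \sum_(i <- gl_supp x) pr i x].
Proof. by rewrite /gl_supp; case: cid. Qed.

Lemma gl_decomp_seq (x : g) (s : seq int) : uniq s -> (forall i, i \notin s -> pr i x = 0) ->
  x = \sum_(i <- s) pr i x.
Proof. by move=> us xs; have [ux xs' ex] := gl_suppP x; rewrite {1}ex; exact: sum_seq_supp_eq. Qed.

Lemma homog_of_pr_eq0 d (x : g) : (forall k, k != d -> pr k x = 0) -> homog d x.
Proof.
move=> x_pr; have [ux xs ex] := gl_suppP x; rewrite /homog {2}ex.
by rewrite (sum_seq_supp1 (k := d)) // => [k _ /x_pr|/xs].
Qed.

Lemma gl_pr_sum_shift (s : seq int) (F : int -> g) d k :
  uniq s -> (forall j, homog (j + d) (F j)) -> (k - d \notin s -> F (k - d) = 0) ->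
  pr k (\sum_(j <- s) F j) = F (k - d).
Proof.
move=> us hF Fk; rewrite raddf_sum (sum_seq_supp1 (k := k - d)) //.
- by have := hF (k - d); rewrite subrK.
- by move=> j _ jk /=; rewrite (homog_pr_eq0 (hF j)) //; apply: contraNneq jk => ->; rewrite addrK.
- by move=> /Fk ->; rewrite raddf0.
Qed.

Lemma gl_pr_br_homogr d k (x y : g) : homog d y -> pr k (br x y) = br (pr (k - d) x) y.
Proof.
move=> hy; have [ux xs ex] := gl_suppP x; rewrite [in LHS]ex lie_br_suml.
apply: gl_pr_sum_shift => // [j|/xs ->]; last exact: lie_br0l.
exact: gl_br_homog (homog_pr _ _) hy.
Qed.

Lemma gl_pr_sum_brr_homog d k (x y : g) (s : seq int) :
  homog d x -> uniq s -> (forall i, i \notin s -> pr i y = 0) ->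
  pr k (\sum_(j <- s) br x (pr j y)) = br x (pr (k - d) y).
Proof.
move=> hx us ys; apply: gl_pr_sum_shift => // [j|/ys ->]; last exact: lie_br0r_homog hx.
by rewrite addrC; exact: gl_br_homog hx (homog_pr _ _).
Qed.

End GradedLie.

Section Module.
Variables (K : fieldType) (g : gradedLie K) (M : gModule g).
Local Notation br := (@lie_br K g).
Local Notation pr := (@gl_pr K g).
Local Notation act := (@gm_act K g M).

Lemma gm_act_linear x : linear (act x).
Proof. by move=> a m n; rewrite gm_actDr gm_actZr. Qed.

HB.instance Definition _ x := GRing.isLinear.Build K M M *:%R (act x) (gm_act_linear x).

Lemma gm_act0l m : act 0 m = 0.
Proof. by have := gm_actZl 0 0 m; rewrite !scale0r. Qed.

Lemma gm_act0r x : act x 0 = 0.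
Proof. exact: raddf0. Qed.

Lemma gm_actBl x y m : act (x - y) m = act x m - act y m.
Proof. by rewrite gm_actDl -scaleN1r gm_actZl scaleN1r. Qed.

Lemma gm_act_suml (I : Type) (s : seq I) (F : I -> g) m :
  act (\sum_(i <- s) F i) m = \sum_(i <- s) act (F i) m.
Proof.
elim: s => [|i s IH]; first by rewrite !big_nil gm_act0l.
by rewrite !big_cons gm_actDl IH.
Qed.

Lemma gm_act_comm x y m : act x (act y m) = act (br x y) m + act y (act x m).
Proof. by rewrite gm_act_br subrK. Qed.

Lemma gm_act_br_anti x y m : act (br x y) m = - act (br y x) m.
Proof. by rewrite !gm_act_br opprB. Qed.

Lemma gm_act_decomp x (s : seq int) m : uniq s -> (forall i, i \notin s -> pr i x = 0) ->
  act x m = \sum_(i <- s) act (pr i x) m.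
Proof. by move=> us xs; rewrite {1}(gl_decomp_seq us xs) gm_act_suml. Qed.

Lemma gm_act_br_sumr (I : Type) (s : seq I) (F : I -> g) x m :
  act (br x (\sum_(i <- s) F i)) m = \sum_(i <- s) act (br x (F i)) m.
Proof.
under [RHS]eq_bigr do rewrite gm_act_br.
by rewrite sumrB gm_act_br !gm_act_suml linear_sum.
Qed.

Lemma gm_act_brZr x a y m : act (br x (a *: y)) m = a *: act (br x y) m.
Proof. by rewrite !gm_act_br !gm_actZl linearZ scalerBr. Qed.

Lemma gm_act_br_decomp x y (s s' : seq int) m :
    uniq s -> (forall i, i \notin s -> pr i x = 0) ->
    uniq s' -> (forall j, j \notin s' -> pr j y = 0) ->
  act (br x y) m = \sum_(i <- s) \sum_(j <- s') act (br (pr i x) (pr j y)) m.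
Proof.
move=> us xs us' ys; rewrite {1}(gl_decomp_seq us xs) lie_br_suml gm_act_suml.
by apply: eq_bigr => i _; rewrite {1}(gl_decomp_seq us' ys) gm_act_br_sumr.
Qed.

Definition gm_ker (z : g) : Prop := forall m : M, act z m = 0.

Lemma gm_ker_brl z y : gm_ker z -> gm_ker (br z y).
Proof. by move=> kz m; rewrite gm_act_br !kz raddf0 subr0. Qed.

Lemma gm_ker_brr z y : gm_ker z -> gm_ker (br y z).
Proof. by move=> kz m; rewrite gm_act_br !kz raddf0 subrr. Qed.

End Module.

Section Span.
Variables (K : fieldType) (W : lmodType K).

Inductive lspan (P : W -> Prop) : W -> Prop :=
| lspan0 : lspan P 0
| lspan_cons a y u : P y -> lspan P u -> lspan P (a *: y + u).

Implicit Types (P Q : W -> Prop) (u x y : W).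

Lemma lspan1 P y : P y -> lspan P y.
Proof. by move=> Py; have := lspan_cons 1 Py (lspan0 P); rewrite scale1r addr0. Qed.

Lemma lspan_lin P a x y : lspan P x -> lspan P y -> lspan P (a *: x + y).
Proof.
move=> Px Py; elim: Px => [|b z u Pz _ IH]; first by rewrite scaler0 add0r.
by rewrite scalerDr scalerA -addrA; exact: lspan_cons.
Qed.

Lemma lspanD P x y : lspan P x -> lspan P y -> lspan P (x + y).
Proof. by rewrite -{2}[x]scale1r; exact: lspan_lin. Qed.

Lemma lspanZ P a x : lspan P x -> lspan P (a *: x).
Proof. by move=> Px; rewrite -[_ *: _]addr0; apply: lspan_lin Px (lspan0 P). Qed.

Lemma lspan_sum P (I : Type) (s : seq I) (C : pred I) (F : I -> W) :
  (forall i, C i -> lspan P (F i)) -> lspan P (\sum_(i <- s | C i) F i).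
Proof. by move=> PF; apply: big_ind => //; [exact: lspan0 | exact: lspanD]. Qed.

Lemma lspan_sub P Q u : (forall y, P y -> Q y) -> lspan P u -> lspan Q u.
Proof. by move=> PQ; elim=> [|a y w /PQ Qy _ IH]; [exact: lspan0 | exact: lspan_cons]. Qed.

Lemma lspan_idem P u : lspan (lspan P) u -> lspan P u.
Proof. by elim=> [|a y w Py _ IH]; [exact: lspan0 | exact: lspan_lin]. Qed.

Lemma lspan_inspan P (s : seq W) u : (forall y, y \in s -> P y) -> inspan s u -> lspan P u.
Proof.
move=> sP [c ->]; apply: lspan_sum => j _; apply/lspanZ/lspan1/sP.
by rewrite mem_nth.
Qed.

End Span.

Lemma lspan_linear_image (K : fieldType) (W W' : lmodType K) (f : W -> W')
    (P : W -> Prop) (Q : W' -> Prop) u :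
  linear f -> (forall y, P y -> lspan Q (f y)) -> lspan P u -> lspan Q (f u).
Proof.
move=> f_lin PQ; have f0 : f 0 = 0 by rewrite -(subrr 0) (zmod_morphism_linear f_lin) subrr.
elim=> [|a y w Py _ IH]; first by rewrite f0; exact: lspan0.
by rewrite f_lin; exact: lspan_lin (PQ _ Py) IH.
Qed.

Section VermaMonomials.
Variables (K : fieldType) (g : gradedLie K) (chi : g -> K) (lam : K) (M : gModule g) (v : M).
Local Notation act := (@gm_act K g M).

Lemma Mdeg_lspan n m : Mdeg v n m -> lspan (unm_mono v n) m.
Proof. by move=> [s [sP ms]]; exact: lspan_inspan sP ms. Qed.

Definition neg_mono (u : M) : Prop := exists2 n, (0 < n)%N & unm_mono v n u.

Hypothesis hv : hw_vector chi lam v.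

Lemma unm_mono_act_homog0 x n u :
  homog 0 x -> unm_mono v n u -> lspan (unm_mono v n) (act x u).
Proof.
move=> hx; elim=> [|d n' y m d_gt0 hy hm IH].
  by rewrite (proj2 hv) //; apply/lspanZ/lspan1/unm_mono0.
rewrite gm_act_comm; apply: lspanD.
  by apply/lspan1/unm_monoS => //; rewrite -[- _]add0r; exact: gl_br_homog hx hy.
apply: lspan_linear_image IH => [|w hw]; first exact: gm_act_linear.
exact/lspan1/unm_monoS.
Qed.

Section Singular.
Hypotheses (irrM : irreducible M) (v_notin_neg : ~ lspan neg_mono v).
Variable m : M.
Hypotheses (m_neg : lspan neg_mono m)
  (m_sing : forall (j : int) x, 0 < j -> homog j x -> act x m = 0).

Inductive nonpos_orbit : M -> Prop :=
| nonpos_orbit_base : nonpos_orbit m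
| nonpos_orbit_act k y u : k <= 0 -> homog k y -> nonpos_orbit u -> nonpos_orbit (act y u).

Lemma nonpos_orbit_act_homog u : nonpos_orbit u ->
  forall j x, homog j x -> lspan nonpos_orbit (act x u).
Proof.
elim=> [|k y u' hk hy ou IH] j x hx.
  have [j_gt0|j_le0] := ltrP 0 j; first by rewrite (m_sing j_gt0 hx); exact: lspan0.
  exact/lspan1/(nonpos_orbit_act j_le0 hx nonpos_orbit_base).
have [j_gt0|j_le0] := ltrP 0 j.
  2: exact/lspan1/(nonpos_orbit_act j_le0 hx (nonpos_orbit_act hk hy ou)).
rewrite gm_act_comm; apply: lspanD; first exact: IH _ _ (gl_br_homog hx hy).
apply: lspan_linear_image (IH _ _ hx) => [|w ow]; first exact: gm_act_linear.
exact/lspan1/(nonpos_orbit_act hk hy ow).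
Qed.

Lemma lspan_nonpos_orbit_act x u : lspan nonpos_orbit u -> lspan nonpos_orbit (act x u).
Proof.
apply: lspan_linear_image => [|w ow]; first exact: gm_act_linear.
have [ux xs _] := gl_suppP x; rewrite (gm_act_decomp _ ux xs).
by apply: lspan_sum => i _; exact: nonpos_orbit_act_homog ow _ _ (homog_pr _ _).
Qed.

Lemma nonpos_orbit_neg u : nonpos_orbit u -> lspan neg_mono u.
Proof.
elim=> [|k y u' hk hy _ IH]; first exact: m_neg.
apply: lspan_linear_image IH => [|w [n n_gt0 hw]]; first exact: gm_act_linear.
have [k0|k_neq0] := eqVneq k 0.
  rewrite k0 in hy; apply: lspan_sub (unm_mono_act_homog0 hy hw) => z hz.
  by exists n.
apply/lspan1; exists (n + `|k|)%N; first by rewrite addn_gt0 n_gt0.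
apply: unm_monoS => //; first by rewrite absz_gt0.
by rewrite abszE ler0_norm // opprK.
Qed.

Lemma singular_neg_eq0 : m = 0.
Proof.
apply: contrapT => m_neq0.
have S_sub : submodule (lspan nonpos_orbit).
  by split=> [|a x y|x u]; [exact: lspan0 | exact: lspan_lin | exact: lspan_nonpos_orbit_act].
have Sv : lspan nonpos_orbit v.
  by apply: (proj2 irrM) S_sub _ v; exists m; split=> //; exact/lspan1/nonpos_orbit_base.
by apply/v_notin_neg/lspan_idem; exact: lspan_sub nonpos_orbit_neg Sv.
Qed.

End Singular.
End VermaMonomials.

Section KernelGraded.
Variables (K : fieldType) (g : gradedLie K) (chi : g -> K) (lam : K) (M : gModule g) (v : M).
Hypotheses (hv : hw_vector chi lam v) (hchi : nonsingular_character chi).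
Hypotheses (lam_neq0 : lam != 0) (v_neq0 : v != 0).
Local Notation br := (@lie_br K g).
Local Notation pr := (@gl_pr K g).
Local Notation act := (@gm_act K g M).

Lemma hw_homog0_chi h : homog 0 h -> act h v = 0 -> chi h = 0.
Proof.
move=> hh; rewrite (proj2 hv) // => /eqP; rewrite scaler_eq0 (negPf v_neq0) orbF.
by rewrite mulf_eq0 (negPf lam_neq0) => /eqP.
Qed.

Lemma hw_homog_pos j x : 0 < j -> homog j x -> act x v = 0.
Proof. by move=> j_gt0 hx; apply: (proj1 hv); exact: homog_inNp hx. Qed.

Lemma chiB x y : chi (x - y) = chi x - chi y.
Proof.
by case: hchi => chi_lin _ _ _ _; rewrite addrC -scaleN1r chi_lin mulN1r addrC.
Qed.

Lemma ker_neg_step z k : gm_ker M z -> k < 0 -> (forall j, j < k -> pr j z = 0) ->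
  pr k z = 0.
Proof.
move=> kz k_lt0 z_low; have [_ _ _ _ nondeg_m] := hchi; have [uz zs ez] := gl_suppP z.
have chi_br e : homog (- k) e -> chi (br e (pr k z)) = 0.
  move=> he; apply: hw_homog0_chi.
    by rewrite -(addNr k); exact: gl_br_homog he (homog_pr _ _).
  have := gm_ker_brr e kz v; rewrite {1}ez gm_act_br_sumr.
  rewrite (sum_seq_supp1 (k := k)) // => [j _ jk|/zs ->].
  - case: (ltrgtP j k) jk => // [j_lt|j_gt] _.
      by rewrite z_low // (lie_br0r_homog he) gm_act0l.
    apply: (@hw_homog_pos (- k + j)); first by rewrite addrC subr_gt0.
    exact: gl_br_homog he (homog_pr _ _).
  - by rewrite (lie_br0r_homog he) gm_act0l.
apply: nondeg_m => [|u _]; first exact: homog_inNm k_lt0 (homog_pr _ _).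
by rewrite (gl_pr_br_homogr _ _ (homog_pr k z)) sub0r; exact/chi_br/homog_pr.
Qed.

Lemma ker_neg z k : gm_ker M z -> k < 0 -> pr k z = 0.
Proof.
move=> kz; have [uz zs _] := gl_suppP z.
pose B := (\sum_(i <- gl_supp z) `|i|).+1.
suff z_low n : forall k, k < 0 -> (B <= `|k| + n)%N -> pr k z = 0.
  by move=> k_lt0; apply: (z_low B) => //; rewrite leq_addl.
elim: n => [|n IH] k' k'_lt0 k'_big.
  apply: zs; apply: contraTN k'_big => k's; rewrite addn0 -ltnNge ltnS.
  by rewrite (bigD1_seq k') //= leq_addr.
by apply: ker_neg_step => // j j_lt; apply: IH; [exact: lt_trans k'_lt0 | lia].
Qed.

Lemma ker_chi0 z : gm_ker M z -> chi (pr 0 z) = 0.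
Proof.
move=> kz; have [uz zs _] := gl_suppP z.
apply: hw_homog0_chi (homog_pr _ _) _.
rewrite -(kz v) (gm_act_decomp _ uz zs) (sum_seq_supp1 (k := 0)) // => [j _ j0|/zs ->].
  2: exact: gm_act0l.
case: (ltrgtP j 0) j0 => // [j_lt|j_gt] _; first by rewrite ker_neg // gm_act0l.
exact: hw_homog_pos j_gt (homog_pr _ _).
Qed.

Lemma ker_pos z d : gm_ker M z -> 0 < d -> pr d z = 0.
Proof.
move=> kz d_gt0; have [_ _ _ nondeg_p _] := hchi; have [uz zs ez] := gl_suppP z.
have chi_br y : homog (- d) y -> chi (br (pr d z) y) = 0.
  move=> hy; apply: hw_homog0_chi.
    by rewrite -(subrr d); exact: gl_br_homog (homog_pr _ _) hy.
  have yz_ker : gm_ker M (\sum_(i <- gl_supp z) br y (pr i z)).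
    by move=> m; rewrite gm_act_suml -gm_act_br_sumr -ez; exact: gm_ker_brr.
  have := gm_ker_brl y kz v; rewrite {1}ez lie_br_suml gm_act_suml.
  rewrite (sum_seq_supp1 (k := d)) // => [j _ jd|/zs ->]; last by rewrite lie_br0l gm_act0l.
  case: (ltrgtP j d) jd => // [j_lt|j_gt] _.
  - (* [pr j z, y] acts on v as minus the (j - d)-component of a kernel element *)
    rewrite gm_act_br_anti; have := gl_pr_sum_brr_homog (j - d) hy uz zs.
    by rewrite opprK subrK => <-; rewrite ker_neg ?subr_lt0 // gm_act0l oppr0.
  - apply: (@hw_homog_pos (j - d)); first by rewrite subr_gt0.
    exact: gl_br_homog (homog_pr _ _) hy.
apply: nondeg_p => [|w _]; first exact: homog_inNp d_gt0 (homog_pr _ _).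
have [uw ws ew] := gl_suppP w.
pose defect := br (pr d z) w - \sum_(j <- gl_supp w) br (pr d z) (pr j w).
have defect_ker : gm_ker M defect.
  by move=> m; rewrite gm_actBl gm_act_suml -gm_act_br_sumr -ew subrr.
have := ker_chi0 defect_ker.
rewrite raddfB /= chiB (gl_pr_sum_brr_homog _ (homog_pr d z) uw ws).
by rewrite sub0r chi_br ?subr0 //; exact: homog_pr.
Qed.

Lemma ker_homog0 z k : gm_ker M z -> k != 0 -> pr k z = 0.
Proof.
move=> kz; case: (ltrgtP k 0) => // [k_lt0|k_gt0] _; first exact: ker_neg.
exact: ker_pos.
Qed.

End KernelGraded.

Section Twist.
Variables (K : fieldType) (g : gradedLie K) (M : gModule g) (t : K).
Hypotheses (t_neq0 : t != 0)
  (ker_homog0 : forall z k, gm_ker M z -> k != 0 -> gl_pr k z = 0).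
Local Notation br := (@lie_br K g).
Local Notation pr := (@gl_pr K g).
Local Notation act := (@gm_act K g M).

Definition grading_twist (x : g) : g := \sum_(i <- gl_supp x) t ^ i *: pr i x.

Lemma grading_twistE x (s : seq int) : uniq s -> (forall i, i \notin s -> pr i x = 0) ->
  grading_twist x = \sum_(i <- s) t ^ i *: pr i x.
Proof.
move=> us xs; have [ux xs' _] := gl_suppP x.
by apply: sum_seq_supp_eq => // i => [/xs'|/xs] ->; rewrite scaler0.
Qed.

Lemma grading_twist_homog k x : homog k x -> grading_twist x = t ^ k *: x.
Proof.
move=> hx; rewrite (@grading_twistE x [:: k]) ?big_seq1 ?hx // => i.
by rewrite inE; exact: homog_pr_eq0.
Qed.

Lemma grading_twist_linear : linear grading_twist.
Proof.
move=> a x y; have [ux xs _] := gl_suppP x; have [uy ys _] := gl_suppP y.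
pose s := undup (gl_supp x ++ gl_supp y).
have us : uniq s := undup_uniq _.
have sx i : i \notin s -> pr i x = 0 by rewrite mem_undup mem_cat negb_or => /andP[/xs].
have sy i : i \notin s -> pr i y = 0 by rewrite mem_undup mem_cat negb_or => /andP[_ /ys].
rewrite (grading_twistE us sx) (grading_twistE us sy) (@grading_twistE _ s) //; last first.
  by move=> i i_s; rewrite linearP /= sx ?sy // scaler0 addr0.
rewrite scaler_sumr -big_split; apply: eq_bigr => i _.
by rewrite linearP /= scalerDr !scalerA mulrC.
Qed.

HB.instance Definition _ := GRing.isLinear.Build K g g *:%R grading_twist grading_twist_linear.

Lemma gm_act_twist_br x y m :
  act (grading_twist (br x y)) m = act (br (grading_twist x) (grading_twist y)) m.
Proof.
have [ux xs _] := gl_suppP x; have [uy ys _] := gl_suppP y.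
pose W := \sum_(i <- gl_supp x) \sum_(j <- gl_supp y) br (pr i x) (pr j y).
have defect_ker : gm_ker M (br x y - W).
  move=> m'; rewrite gm_actBl (gm_act_br_decomp _ ux xs uy ys) gm_act_suml.
  by under [in X in _ - X]eq_bigr do rewrite gm_act_suml; rewrite subrr.
(* the bracket is bilinear up to the kernel, which lies in degree 0 where the twist is trivial *)
have twist_defect : grading_twist (br x y - W) = br x y - W.
  rewrite (grading_twist_homog (k := 0)) ?expr0z ?scale1r //.
  by apply: homog_of_pr_eq0 => k; exact: ker_homog0.
rewrite -[br x y](subrK W) linearD /= twist_defect gm_actDl defect_ker add0r.
rewrite linear_sum /= gm_act_suml [grading_twist x]/grading_twist lie_br_suml gm_act_suml.
apply: eq_bigr => i _; rewrite linear_sum /= gm_act_suml [grading_twist y]/grading_twist.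
rewrite gm_act_br_sumr.
apply: eq_bigr => j _; rewrite (grading_twist_homog (gl_br_homog (homog_pr _ _) (homog_pr _ _))).
by rewrite lie_brZl gm_actZl gm_act_brZr gm_actZl scalerA expfzDr.
Qed.

Lemma twisted_actDl x y m :
  act (grading_twist (x + y)) m = act (grading_twist x) m + act (grading_twist y) m.
Proof. by rewrite linearD gm_actDl. Qed.

Lemma twisted_actZl a x m : act (grading_twist (a *: x)) m = a *: act (grading_twist x) m.
Proof. by rewrite linearZ gm_actZl. Qed.

Lemma twisted_act_br x y m : act (grading_twist (br x y)) m =
  act (grading_twist x) (act (grading_twist y) m) - act (grading_twist y) (act (grading_twist x) m).
Proof. by rewrite gm_act_twist_br gm_act_br. Qed.

Definition twisted_module : gModule g :=
  @GModule K g M (fun x => act (grading_twist x)) twisted_actDl twisted_actZl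
    (fun x => gm_actDr (grading_twist x)) (fun a x => gm_actZr a (grading_twist x))
    twisted_act_br.

Lemma twisted_hw_vector (chi : g -> K) (lam : K) (v : M) :
  hw_vector chi lam v -> hw_vector chi lam (v : twisted_module).
Proof.
move=> [v_pos v_deg0]; split=> [x x_pos|h hh] /=; last first.
  by rewrite (grading_twist_homog hh) expr0z scale1r v_deg0.
rewrite /grading_twist gm_act_suml big1 // => i _.
have [i_gt0|i_le0] := ltrP 0 i; last by rewrite x_pos // scaler0 gm_act0l.
by rewrite gm_actZl v_pos ?scaler0 //; exact: homog_inNp i_gt0 (homog_pr _ _).
Qed.

End Twist.

Section EigenSpan.
Variables (K : fieldType) (W : lmodType K) (F : W -> W).
Hypothesis F_lin : linear F.

HB.instance Definition _ := GRing.isLinear.Build K W W *:%R F F_lin.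

Definition eigen_annihilator (es : seq K) (u : W) : W :=
  foldr (fun c w => F w - c *: w) u es.

Lemma eigen_annihilator_linear es : linear (eigen_annihilator es).
Proof.
move=> a x y; elim: es => [//|e es /= ->].
by rewrite linearP /= scalerBr scalerDr !scalerA [e * a]mulrC opprD addrACA.
Qed.

Lemma eigen_annihilator_eigen es c y :
  F y = c *: y -> eigen_annihilator es y = (\prod_(e <- es) (c - e)) *: y.
Proof.
move=> Fy; elim: es => [|e es /= ->]; first by rewrite big_nil scale1r.
by rewrite linearZ /= Fy big_cons !scalerA -scalerBl mulrBl mulrC.
Qed.

Lemma lspan_eigen_fixed_eq0 u :
  lspan (fun y => exists2 c, c != 1 & F y = c *: y) u -> F u = u -> u = 0.
Proof.
move=> u_span Fu.
have [es es_ne1 esu] : exists2 es, all (fun e => e != 1) es & eigen_annihilator es u = 0.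
  elim: u_span {Fu} => [|a y w [c c_ne1 Fy] _ [es es_ne1 esw]].
    by exists [::]; rewrite //= raddf0.
  exists (c :: es); first by rewrite /= c_ne1.
  rewrite /= eigen_annihilator_linear esw addr0 (eigen_annihilator_eigen _ Fy).
  by rewrite scalerA linearZ /= Fy !scalerA mulrC subrr.
move: esu; rewrite (@eigen_annihilator_eigen es 1 u) ?scale1r //.
move/eqP; rewrite scaler_eq0 => /orP[|/eqP //].
rewrite prodf_seq_eq0 => /hasP[e e_es /=]; rewrite subr_eq0 eq_sym.
by move: es_ne1 => /allP /(_ e e_es) /negPf ->.
Qed.

End EigenSpan.

Definition trivial_module (K : fieldType) (g : gradedLie K) : gModule g :=
  @GModule K g K^o (fun _ _ => 0) (fun _ _ _ => esym (addr0 0))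
    (fun a _ _ => esym (scaler0 _ a)) (fun _ _ _ => esym (addr0 0))
    (fun a _ _ => esym (scaler0 _ a)) (fun _ _ _ => esym (subrr 0)).

Section GradingDirect.
Variables (K : fieldType) (g : gradedLie K) (chi : g -> K) (lam : K) (M : gModule g) (v : M).
Hypothesis hgv : is_gen_verma chi lam v.

Lemma gen_verma_neq0 : irreducible M -> v != 0.
Proof.
move=> [[m m_neq0] _]; apply/eqP => v0; apply: m_neq0.
have hw0 : hw_vector chi lam (0 : M) by split=> [x _|h _]; rewrite gm_act0r ?scaler0.
have [f [_ _ f_uniq]] := (proj2 hgv) M 0 hw0.
have zero_hom : gHom (fun _ : M => 0 : M) by split=> [a _ _|x _]; rewrite ?gm_act0r ?scaler0 ?addr0.
have id_hom : gHom (@id M) by [].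
exact: etrans (f_uniq _ id_hom v0 m) (esym (f_uniq _ zero_hom erefl m)).
Qed.

Lemma gen_verma0_not_neg : lam = 0 -> ~ lspan (neg_mono v) v.
Proof.
move=> lam0 v_neg; have hw1 : hw_vector chi lam (1 : trivial_module g).
  by split=> // h _ /=; rewrite lam0 mul0r scale0r.
have [f [[f_lin f_act] f1 _]] := (proj2 hgv) (trivial_module g) _ hw1.
have f_neg u : lspan (neg_mono v) u -> f u = 0.
  elim=> [|a y w [n n_gt0 hy] _ fw0].
    by rewrite -(subrr 0) (zmod_morphism_linear f_lin) subrr.
  rewrite f_lin fw0 addr0; case: hy n_gt0 => // d n' x m _ _ _ _.
  by rewrite f_act /= scaler0.
by move: (f_neg _ v_neg); rewrite f1 => /eqP; rewrite oner_eq0.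
Qed.

Hypotheses (K_char0 : [pchar K] =i pred0) (hchi : nonsingular_character chi).

Lemma two_powz_neq1 n : (0 < n)%N -> (2 : K) ^ (- (n%:Z)) != 1.
Proof.
move=> n_gt0; rewrite -exprnN invr_eq1 -natrX.
have : (2 ^ n - 1)%:R != 0 :> K.
  by rewrite (pcharf0P _).1 // subn_eq0 -ltnNge -{1}(expn0 2) ltn_exp2l.
by rewrite natrB ?expn_gt0 // subr_eq0.
Qed.

Lemma gen_verma_twist_not_neg : lam != 0 -> v != 0 -> ~ lspan (neg_mono v) v.
Proof.
move=> lam_neq0 v_neq0 v_neg; have two_neq0 : (2 : K) != 0 by rewrite (pcharf0P _).1.
have ker0 := ker_homog0 (proj1 hgv) hchi lam_neq0 v_neq0.
have [f [[f_lin f_act] fv _]] :=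
  (proj2 hgv) (twisted_module two_neq0 ker0) v (twisted_hw_vector two_neq0 ker0 (proj1 hgv)).
have f_mono n u : unm_mono v n u -> f u = (2 : K) ^ (- (n%:Z)) *: u.
  elim=> [|d n' x m _ hx _ IH]; first by rewrite fv expr0z scale1r.
  rewrite f_act /= IH linearZ /= (grading_twist_homog _ hx) gm_actZl scalerA -expfzDr //.
  by rewrite PoszD opprD addrC.
move/eqP: v_neq0; apply; apply: (lspan_eigen_fixed_eq0 f_lin) fv.
apply: lspan_sub v_neg => u [n n_gt0 hu]; exists (2 ^ (- (n%:Z))); last exact: f_mono.
exact: two_powz_neq1.
Qed.

Lemma gen_verma_not_neg : irreducible M -> ~ lspan (neg_mono v) v.
Proof.
move=> irrM; have [lam0|lam_neq0] := eqVneq lam 0; first exact: gen_verma0_not_neg.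
exact: gen_verma_twist_not_neg lam_neq0 (gen_verma_neq0 irrM).
Qed.

End GradingDirect.

Lemma scalar0 (K : fieldType) (W : lmodType K) (f : W -> K) : scalar f -> f 0 = 0.
Proof. by move=> f_lin; have := f_lin (-1) 0 0; rewrite scaler0 addr0 mulN1r addNr. Qed.

Lemma scalar_sumZ (K : fieldType) (W : lmodType K) (f : W -> K) (I : Type) (s : seq I)
    (a : I -> K) (x : I -> W) :
  scalar f -> f (\sum_(i <- s) a i *: x i) = \sum_(i <- s) a i * f (x i).
Proof.
move=> f_lin; elim: s => [|i s IH]; first by rewrite !big_nil scalar0.
by rewrite !big_cons f_lin IH.
Qed.

Section Contraction.
Variables (K : fieldType) (g : gradedLie K) (M V : gModule g).

Definition tens_contr (phi : V -> K) (t : seq (M * V)) : M := \sum_(p <- t) phi p.2 *: p.1.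

Lemma tens_contr_eval (f : M -> K) (phi : V -> K) t : scalar f -> scalar phi ->
  f (tens_contr phi t) = phi (tens_eval f t).
Proof.
move=> f_lin phi_lin; rewrite /tens_eval !scalar_sumZ //.
by apply: eq_bigr => p _; rewrite mulrC.
Qed.

Lemma tens_eq_contr t1 t2 :
  tens_eq t1 t2 <-> forall phi, scalar phi -> tens_contr phi t1 = tens_contr phi t2.
Proof.
split=> [t12 phi phi_lin|t12 f f_lin]; apply/eqP; rewrite -subr_eq0; apply/eqP.
- apply: scalar_separates => f f_lin.
  rewrite addrC -scaleN1r f_lin !tens_contr_eval // t12 //.
  by rewrite mulN1r addNr.
- apply: scalar_separates => phi phi_lin.
  rewrite addrC -scaleN1r phi_lin -!tens_contr_eval // t12 //.
  by rewrite mulN1r addNr.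
Qed.

End Contraction.

Section Uniqueness.
Variables (K : fieldType) (g : gradedLie K) (chi : g -> K) (lam : K).
Variables (M : gModule g) (v : M) (V : gModule g).
Local Notation act := (@gm_act K g M).

Lemma lspan_tens_contr (z : nat -> seq (M * V)) n phi :
  in_ctens v z -> lspan (unm_mono v n) (tens_contr phi (z n)).
Proof.
move=> zc; rewrite /tens_contr big_seq.
by apply: lspan_sum => p /zc/Mdeg_lspan; exact: lspanZ.
Qed.

Lemma zc_eq_above (z1 z2 : nat -> seq (M * V)) n :
  (forall m, (m <= n)%N -> tens_eq (z1 m) (z2 m)) ->
  forall k : int, - (n.+1%:Z) < k -> tens_eq (zc z1 k) (zc z2 k).
Proof.
move=> z12 [[|k]|k] /= k_gt; [exact: z12 | by [] | apply: z12].
by move: k_gt; rewrite NegzE ltrN2 ltz_nat ltnS.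
Qed.

Lemma tens_contr_act_comp phi (z : nat -> seq (M * V)) x j k : homog j x ->
  tens_contr phi (act_comp x [:: j] z k) =
  act x (tens_contr phi (zc z (k - j))) + tens_contr (phi \o gm_act x) (zc z k).
Proof.
move=> hx; rewrite /act_comp /= cats0 /tens_contr big_cat !big_map /= hx linear_sum.
by congr (_ + _); apply: eq_bigr => p _; rewrite linearZ.
Qed.

Lemma invariant_diff_singular (z1 z2 : nat -> seq (M * V)) n phi :
  ctens_invariant z1 -> ctens_invariant z2 ->
  (forall m, (m <= n)%N -> tens_eq (z1 m) (z2 m)) -> scalar phi ->
  forall (j : int) x, 0 < j -> homog j x ->
    act x (tens_contr phi (z1 n.+1) - tens_contr phi (z2 n.+1)) = 0.
Proof.
move=> inv1 inv2 z12 phi_lin j x j_gt0 hx.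
have xs i : i \notin [:: j] -> gl_pr i x = 0 by rewrite inE; exact: homog_pr_eq0.
have phix_lin : scalar (phi \o gm_act x) by move=> a p q; rewrite /= gm_act_linear phi_lin.
(* the degree j - n - 1 component of the invariance equation *)
have act_top z : ctens_invariant z ->
    act x (tens_contr phi (z n.+1)) = - tens_contr (phi \o gm_act x) (zc z (j - n.+1%:Z)).
  move=> inv; apply/eqP; rewrite -addr_eq0; apply/eqP.
  have := (tens_eq_contr _ _).1 (inv x [:: j] erefl xs (j - n.+1%:Z)) phi phi_lin.
  rewrite tens_contr_act_comp // [j - _ - j]addrAC subrr add0r -NegzE => ->.
  by rewrite /tens_contr big_nil.
rewrite linearB /= !act_top // ((tens_eq_contr _ _).1 (zc_eq_above z12 _)) ?subrr //.
by rewrite -subr_gt0 opprK subrK.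
Qed.

Hypotheses (K_char0 : [pchar K] =i pred0) (hchi : nonsingular_character chi).
Hypotheses (hgv : is_gen_verma chi lam v) (irrM : irreducible M).

Theorem invariant_leading_term_uniq (w : V) (z1 z2 : nat -> seq (M * V)) :
    in_ctens v z1 -> ctens_invariant z1 -> leading_term v w z1 ->
    in_ctens v z2 -> ctens_invariant z2 -> leading_term v w z2 ->
  forall n, tens_eq (z1 n) (z2 n).
Proof.
move=> c1 inv1 lead1 c2 inv2 lead2; elim/ltn_ind => -[|n] IH.
  by move=> f f_lin; rewrite lead1 // lead2.
apply/tens_eq_contr => phi phi_lin; apply/eqP; rewrite -subr_eq0; apply/eqP.
apply: (singular_neg_eq0 (proj1 hgv) irrM (gen_verma_not_neg hgv K_char0 hchi irrM)).
  rewrite addrC -scaleN1r.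
  have := lspan_lin (-1) (lspan_tens_contr n.+1 phi c2) (lspan_tens_contr n.+1 phi c1).
  by apply: lspan_sub => u; exists n.+1.
by apply: invariant_diff_singular => // m; rewrite -ltnS; exact: IH.
Qed.

End Uniqueness.

Theorem proposition4p1 (R : realType) (g : gradedLie R[i]) (chi : g -> R[i])
  (lam : R[i]) (M : gModule g) (v : M) (V : gModule g) (w : V) :
  nonsingular_character chi ->
  is_gen_verma chi lam v ->
  irreducible M ->
  forall z1 z2 : nat -> seq (M * V),
    in_ctens v z1 -> ctens_invariant z1 -> leading_term v w z1 ->
    in_ctens v z2 -> ctens_invariant z2 -> leading_term v w z2 ->
    forall n : nat, tens_eq (z1 n) (z2 n).
Proof.
move=> hchi hgv irrM.
exact: invariant_leading_term_uniq (pchar_num _) hchi hgv irrM w.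
Qed.
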